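(* Let $e_0,e$ be two distinct symbols, and let $u_1,\dots,u_k,x_1,\dots,x_k,v$ be strings in which neither $e_0$ nor $e$ occurs. Let $$w = e_0\,u_1\,e\,u_2\,e\cdots e\,u_k\,e\;e_0\;x_1\,e\,x_2\,e\cdots e\,x_k\,e\,v.$$ Then every accepting computation $\varepsilon\,\|\,w\vdash^*\varepsilon\,\|\,\varepsilon$ of the queue automaton proceeds as $$\varepsilon\,\|\,w \vdash^* u_1eu_2e\cdots u_ke\,\|\,x_1ex_2e\cdots x_kev \vdash^* u_2e\cdots u_ke\,z_1\,\|\,x_2e\cdots x_kev \vdash^* \cdots$$ $$\cdots\vdash^* u_ke\,z_1\cdots z_{k-1}\,\|\,x_kev \vdash^* z_1\cdots z_k\,\|\,v \vdash^* \varepsilon\,\|\,\varepsilon$$ for some strings $z_1,\dots,z_k$; that is, for each $i$ the computation passes through the configuration $u_{i+1}e\cdots u_ke\,z_1\cdots z_i\,\|\,x_{i+1}e\cdots x_kev$, so that each $x_i$ is consumed by the corresponding $u_i$ with resultant $z_i$.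
   Context: Strings are over a finite alphabet; $\varepsilon$ is the empty string. The queue automaton: a configuration is written $Q\,\|\,x$ ($Q$ = queue contents, $x$ = remaining input). A single step $C\vdash C'$ is one of: from $Q\,\|\,\sigma x$ (with $\sigma$ a symbol) go to $Q\sigma\,\|\,x$ ($\sigma$ pushed onto the right end of the queue), or, if $Q=\sigma Q'$, go to $Q'\,\|\,x$ (input $\sigma$ matched against the leftmost queue symbol, which is popped). $C\vdash^*C'$ means reachable in zero or more steps; a computation is such a sequence of steps. A configuration $C$ is accepted if $C\vdash^*\varepsilon\,\|\,\varepsilon$, and an accepting computation of $w$ is a computation $\varepsilon\,\|\,w\vdash^*\varepsilon\,\|\,\varepsilon$. When a computation passes through configurations $u_1u_2u_3\,\|\,x_1x_2x_3 \vdash^* u_2u_3z_1\,\|\,x_2x_3 \vdash^* u_3z_1z_2\,\|\,x_3$ we say $x_2$ is consumed by $u_2$ with resultant $z_2$. *)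

From mathcomp Require Import all_boot.
Set Implicit Arguments. Unset Strict Implicit. Unset Printing Implicit Defensive.

(* A configuration  Q || x  is the pair (Q, x): queue contents, remaining input. *)
Definition config (T : eqType) := (seq T * seq T)%type.

Definition qstep (T : eqType) (c c' : config T) : bool :=
  match c.2 with
  | [::] => false
  | s :: x =>
      ((c' == (rcons c.1 s, x)) || ((c.1 == s :: c'.1) && (c'.2 == x)))
  end.

(* An accepting computation of w: a sequence of configurations
   (eps || w) = C_0 |- C_1 |- ... |- C_n = (eps || eps); here cs = [C_1;...;C_n]. *)
Definition accepting_computation (T : eqType) (w : seq T) (cs : seq (config T)) : bool :=
  path (@qstep T) ([::], w) cs && (last ([::], w) cs == ([::], [::])).

Definition comp_configs (T : eqType) (w : seq T) (cs : seq (config T)) : seq (config T) :=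
  ([::], w) :: cs.

Definition sep_cat (T : eqType) (e : T) (ss : seq (seq T)) : seq T :=
  flatten [seq s ++ [:: e] | s <- ss].

Definition the_word (T : eqType) (e0 e : T) (u x : seq (seq T)) (v : seq T) : seq T :=
  e0 :: sep_cat e u ++ e0 :: sep_cat e x ++ v.

Definition stage_config (T : eqType) (e : T) (u x z : seq (seq T)) (v : seq T) (i : nat)
  : config T :=
  (sep_cat e (drop i u) ++ flatten (take i z), sep_cat e (drop i x) ++ v).

From mathcomp Require Import all_boot zify.
Set Implicit Arguments. Unset Strict Implicit. Unset Printing Implicit Defensive.

(* Every symbol pushed onto the queue is later popped against an equal input
   symbol, so along an accepting computation the queue never holds more copies of
   a symbol than the remaining input.  While [u_1 e ... u_k e] is read, nothing can
   be popped (the queue starts with [e0]); the second [e0] must then pop the first.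
   Afterwards, whenever the input reaches the [e] ending [x_i], pushing it would
   give the queue more [e]'s than the rest of the input, so it is popped -- which
   forces [u_i e] to have been consumed exactly while [x_i e] was read, everything
   pushed meanwhile forming [z_i]. *)

Lemma drop_eq_cons (A : Type) (x0 : A) (s : seq A) n y ys :
  drop n s = y :: ys -> n < size s /\ nth x0 s n = y.
Proof.
move=> hd; split; first by have := congr1 size hd; rewrite size_drop /=; lia.
by rewrite -[n]addn0 -nth_drop hd.
Qed.

Lemma sorted_rcons (A : Type) (r : rel A) (x0 : A) (s : seq A) y :
  sorted r s -> r (last x0 s) y -> sorted r (rcons s y).
Proof. by case: s => //= a s; rewrite rcons_path => ->. Qed.

Section QueueRuns.
Variable T : eqType.
Implicit Types (m : T) (Q R a b y : seq T) (c d : config T) (cs ds : seq (config T)).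

Definition accepting_run c cs := path (@qstep T) c cs && (last c cs == ([::], [::])).

Definition reaches c cs d ds := exists n, drop n (c :: cs) = d :: ds.

Lemma accepting_run_cons c d cs :
  accepting_run c (d :: cs) = qstep c d && accepting_run d cs.
Proof. by rewrite /accepting_run /= andbA. Qed.

Lemma reaches_refl c cs : reaches c cs c cs.
Proof. by exists 0. Qed.

Lemma reaches_next c d cs : reaches c (d :: cs) d cs.
Proof. by exists 1. Qed.

Lemma reaches_trans c cs d ds f fs :
  reaches c cs d ds -> reaches d ds f fs -> reaches c cs f fs.
Proof. by move=> [n hn] [p hp]; exists (p + n); rewrite -drop_drop hn. Qed.

Lemma accepting_run_reaches c cs d ds :
  accepting_run c cs -> reaches c cs d ds -> accepting_run d ds.
Proof.
move=> hr [n]; elim: n c cs hr => [|n IH] c cs hr /=; first by case=> <- <-.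
case: cs hr => [|c' cs] /=; first by case: n IH.
by rewrite accepting_run_cons => /andP [_ /IH].
Qed.

(* Every symbol in the queue must eventually be matched by an input symbol. *)
Lemma count_queue_le_input m c cs :
  accepting_run c cs -> count (pred1 m) c.1 <= count (pred1 m) c.2.
Proof.
elim: cs c => [|d cs IH] [Q y].
  by rewrite /accepting_run /= => /eqP [-> ->].
rewrite accepting_run_cons => /andP [hq /IH]; case: y hq => [|s y] //=.
case/orP=> [/eqP -> | /andP [/= /eqP -> /eqP ->]] /=; last by lia.
by rewrite -cats1 count_cat /=; lia.
Qed.

Lemma accepting_run_next Q (s : T) y cs : accepting_run (Q, s :: y) cs ->
  exists d ds, [/\ cs = d :: ds, qstep (Q, s :: y) d & accepting_run d ds].
Proof.
case: cs => [|d ds]; first by rewrite /accepting_run /= => /andP [_ /eqP].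
by rewrite accepting_run_cons => /andP [hq hr]; exists d, ds.
Qed.

Lemma next_push Q (s : T) y cs : ohead Q != Some s -> accepting_run (Q, s :: y) cs ->
  exists ds, cs = (rcons Q s, y) :: ds.
Proof.
move=> hQ /accepting_run_next [d [ds [-> hq _]]]; exists ds.
case/orP: hq => [/eqP -> // | /andP [/= /eqP hQs _]].
by rewrite hQs eqxx in hQ.
Qed.

Lemma next_pop Q (s : T) y cs :
  count (pred1 s) y < count (pred1 s) Q -> accepting_run (Q, s :: y) cs ->
  exists Q' ds, Q = s :: Q' /\ cs = (Q', y) :: ds.
Proof.
move=> hlt /accepting_run_next [[Q' y'] [ds [-> hq hr]]].
case/orP: hq => [/eqP [hQ' hy'] | /andP [/= /eqP -> /eqP /= hy']].
  have := count_queue_le_input s hr.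
  by rewrite /= hQ' hy' -cats1 count_cat /= eqxx; lia.
by exists Q', ds; rewrite hy'.
Qed.

Lemma pushes_past (t : T) Q b y cs : t \notin b -> accepting_run (t :: Q, b ++ y) cs ->
  exists ds, reaches (t :: Q, b ++ y) cs (t :: Q ++ b, y) ds.
Proof.
elim: b Q cs => [|s b IH] Q cs; first by rewrite cats0; exists cs; apply: reaches_refl.
rewrite inE negb_or => /andP [hts htb] hr.
have hhead : ohead (t :: Q) != Some s by apply/eqP => -[hts']; rewrite hts' eqxx in hts.
have [ds hcs] := next_push hhead hr.
have hr' : accepting_run (t :: rcons Q s, b ++ y) ds.
  by move: hr; rewrite hcs accepting_run_cons => /andP [].
have [fs hfs] := IH _ _ htb hr'.
exists fs; rewrite hcs; apply: reaches_trans (reaches_next _ _ _) _.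
by rewrite -cat_rcons.
Qed.

(* The count hypothesis forbids pushing the separator [m], so it is popped against
   the [m] of the queue, which must by then be at its head. *)
Lemma consumes_block m a R b y cs :
  m \notin a -> m \notin b -> count (pred1 m) y <= count (pred1 m) R ->
  accepting_run (a ++ m :: R, b ++ m :: y) cs ->
  exists zb ds, reaches (a ++ m :: R, b ++ m :: y) cs (R ++ zb, y) ds.
Proof.
elim: b a R cs => [|s b IH] a R cs ha hb hcount hr.
  have hlt : count (pred1 m) y < count (pred1 m) (a ++ m :: R).
    by rewrite count_cat /= eqxx; lia.
  have [Q' [ds [hQ hcs]]] := next_pop hlt hr; clear hr hlt.
  case: a ha hQ => [_ [->] | s a]; last first.
    by rewrite inE negb_or => /andP [hms _] [hsm]; rewrite hsm eqxx in hms.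
  by exists [::], ds; rewrite cats0 hcs; exact: reaches_next.
move: hb; rewrite inE negb_or cat_cons in hr * => /andP [hms hb].
have [[Q' y'] [ds [-> hq hr']]] := accepting_run_next hr; clear hr.
case/orP: hq => [/eqP [hQ' hy'] | /andP [/= /eqP hQ /eqP /= hy']]; subst y'.
  have hcount' : count (pred1 m) y <= count (pred1 m) (rcons R s).
    by rewrite -cats1 count_cat; lia.
  subst Q'; rewrite rcons_cat rcons_cons in hr' *.
  have [zb [fs hfs]] := IH _ _ _ ha hb hcount' hr'.
  exists (s :: zb), fs.
  by rewrite -[R ++ _]cat_rcons; exact: reaches_trans (reaches_next _ _ _) hfs.
case: a ha hQ => [_ [hsm] | s' a]; first by rewrite hsm eqxx in hms.
rewrite inE negb_or => /andP [_ ha] [_ hQ]; subst Q'.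
have [zb [fs hfs]] := IH _ _ _ ha hb hcount hr'.
by exists zb, fs; exact: reaches_trans (reaches_next _ _ _) hfs.
Qed.

Lemma sep_cat_cons (e : T) (s : seq T) ss : sep_cat e (s :: ss) = s ++ e :: sep_cat e ss.
Proof. by rewrite /sep_cat /= -catA. Qed.

Lemma count_sep_cat m (e : T) ss : all (fun s => m \notin s) ss ->
  count (pred1 m) (sep_cat e ss) = (m == e) * size ss.
Proof.
elim: ss => [|s ss IH] /=; first by rewrite muln0.
move=> /andP [hs hss].
rewrite sep_cat_cons count_cat /= IH // (count_memPn hs) eq_sym.
by case: (m == e) => /=; lia.
Qed.

Lemma stage_config_rcons (e : T) u x z (t : seq T) v j : j <= size z ->
  stage_config e u x (rcons z t) v j = stage_config e u x z v j.
Proof. by move=> hj; rewrite /stage_config -cats1 takel_cat. Qed.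

Section Stages.
Variables (e : T) (u x : seq (seq T)) (v : seq T).
Hypotheses (hux : size x = size u) (hv : e \notin v)
  (hu : all (fun s => e \notin s) u) (hx : all (fun s => e \notin s) x).

(* Stage [i] is [u_(i+1) e R || x_(i+1) e y], where [R] holds at least as many
   [e]'s as [y], so [consumes_block] applies. *)
Lemma stage_step z i cs : i < size u -> size z = i ->
  accepting_run (stage_config e u x z v i) cs ->
  exists t ds,
    reaches (stage_config e u x z v i) cs (stage_config e u x (rcons z t) v i.+1) ds.
Proof.
move=> hi hz hr; have hi' : i < size x by rewrite hux.
have hui : e \notin nth [::] u i by apply: (allP hu); exact: mem_nth.
have hxi : e \notin nth [::] x i by apply: (allP hx); exact: mem_nth.
set R := sep_cat e (drop i.+1 u) ++ flatten z.
set y := sep_cat e (drop i.+1 x) ++ v.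
have hstage : stage_config e u x z v i = (nth [::] u i ++ e :: R, nth [::] x i ++ e :: y).
  rewrite /stage_config (drop_nth [::] hi) (drop_nth [::] hi') take_oversize ?hz //.
  by rewrite !sep_cat_cons -!catA.
have hcount : count (pred1 e) y <= count (pred1 e) R.
  have hdu : all (fun s => e \notin s) (drop i.+1 u) by apply/allP=> s /mem_drop /(allP hu).
  have hdx : all (fun s => e \notin s) (drop i.+1 x) by apply/allP=> s /mem_drop /(allP hx).
  by rewrite /y /R !count_cat !count_sep_cat // (count_memPn hv) !size_drop hux addn0 leq_addr.
rewrite hstage in hr *.
have [t [ds hds]] := consumes_block hui hxi hcount hr.
exists t, ds; rewrite /stage_config take_oversize; last by rewrite size_rcons hz.
by rewrite flatten_rcons catA.
Qed.

Lemma stages_reached c cs i :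
  accepting_run c cs -> (exists ds, reaches c cs (stage_config e u x [::] v 0) ds) ->
  i <= size u ->
  exists z js, [/\ size z = i, size js = i.+1, sorted leq js &
    forall j, j <= i -> exists ds, drop (nth 0 js j) (c :: cs) = stage_config e u x z v j :: ds].
Proof.
move=> hr [ds0 [n0 h0]]; elim: i => [|i IH] hi.
  by exists [::], [:: n0]; split=> // -[|//] _; exists ds0.
have [z [js [hz hjs hsorted hpos]]] := IH (ltnW hi).
have [ds hds] := hpos i (leqnn i).
have [t [fs [m hm]]] := stage_step hi hz (accepting_run_reaches hr (ex_intro _ _ hds)).
exists (rcons z t), (rcons js (m + nth 0 js i)); split.
- by rewrite size_rcons hz.
- by rewrite size_rcons hjs.
- by apply: (@sorted_rcons _ _ 0) => //; rewrite -nth_last hjs leq_addl.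
move=> j; rewrite leq_eqVlt => /orP [/eqP -> | hj].
  by exists fs; rewrite nth_rcons hjs ltnn eqxx -drop_drop hds.
by rewrite nth_rcons hjs hj stage_config_rcons ?hz //; apply: hpos.
Qed.

End Stages.

Lemma reaches_first_stage (e0 e : T) u x v cs :
  e0 != e -> e0 \notin v ->
  all (fun s => e0 \notin s) u -> all (fun s => e0 \notin s) x ->
  accepting_run ([::], the_word e0 e u x v) cs ->
  exists ds, reaches ([::], the_word e0 e u x v) cs (stage_config e u x [::] v 0) ds.
Proof.
move=> hne hv hu hx; rewrite /the_word /stage_config !drop0 /= cats0 => hr.
set y := sep_cat e x ++ v.
have heu : e0 \notin sep_cat e u.
  by apply/count_memPn; rewrite count_sep_cat // (negbTE hne).
have hy : count (pred1 e0) y = 0.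
  by rewrite count_cat count_sep_cat // (negbTE hne) (count_memPn hv).
have [ds1 hcs] := next_push (Q := [::]) isT hr.
have hr1 : accepting_run ([:: e0], sep_cat e u ++ e0 :: y) ds1.
  by move: hr; rewrite hcs accepting_run_cons => /andP [].
have [ds2 h2] := pushes_past (Q := [::]) heu hr1.
have hlt : count (pred1 e0) y < count (pred1 e0) (e0 :: sep_cat e u) by rewrite /= eqxx hy.
have [Q' [ds3 [[<-] hds3]]] := next_pop hlt (accepting_run_reaches hr1 h2).
exists ds3; rewrite hcs; apply: reaches_trans (reaches_next _ _ _) _.
by apply: reaches_trans h2 _; rewrite hds3; exact: reaches_next.
Qed.

End QueueRuns.

Theorem lemma2 (T : eqType) (e0 e : T) (k : nat) (u x : seq (seq T)) (v : seq T)
    (cs : seq (config T)) :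
  e0 != e -> 0 < k -> size u = k -> size x = k ->
  all (fun s => (e0 \notin s) && (e \notin s)) (v :: u ++ x) ->
  accepting_computation (the_word e0 e u x v) cs ->
  exists z : seq (seq T), size z = k /\
    exists js : seq nat, [/\ size js = k.+1, sorted leq js &
      forall i, i <= k ->
        nth 0 js i < size (comp_configs (the_word e0 e u x v) cs) /\
        nth ([::], [::]) (comp_configs (the_word e0 e u x v) cs) (nth 0 js i)
          = stage_config e u x z v i].
Proof.
move=> hne _ hu hx hall hr; have hux : size x = size u by rewrite hu hx.
move: hall; rewrite (all_predI (fun s => e0 \notin s)) /= !all_cat.
case/andP=> /and3P [hv0 hu0 hx0] /and3P [hv hue hxe].
have [z [js [hz hjs hsorted hpos]]] :=
  stages_reached hux hv hue hxe hr (reaches_first_stage hne hv0 hu0 hx0 hr) (eq_leq (esym hu)).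
exists z; split=> //; exists js; split=> // i hi.
by have [ds /(drop_eq_cons ([::], [::]))] := hpos i hi.
Qed.
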